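(* There exist absolute constants $0<c_1\le c_2$ and $\rho>0$ such that the following holds. Let $k\ge2$ be even and let $\delta\in\mathbb R^{k\times k}$, $\delta\neq0$, satisfy $\sum_{j\in[k]}\delta_{i_0j}=0$ and $\sum_{i\in[k]}\delta_{ij_0}=0$ for all $i_0,j_0\in[k]$. Let $X=(X_1,\dots,X_k)$ and $Y=(Y_1,\dots,Y_k)$ be independent, each uniformly distributed over the binary vectors in $\{0,1\}^k$ of Hamming weight $k/2$, and let $Z=\sum_{(i,j)\in[k]\times[k]}\delta_{ij}X_iY_j$. Then $$\Pr\Big[\frac{Z^2}{\|\delta\|_F^2}\in[c_1,c_2]\Big]\ge\rho .$$
   Context: $\|\delta\|_F^2=\sum_{i,j}\delta_{ij}^2$ is the squared Frobenius norm. *)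

From HB Require Import structures.
From mathcomp Require Import all_boot all_order all_algebra.
Set Implicit Arguments. Unset Strict Implicit. Unset Printing Implicit Defensive.
Import Order.TTheory GRing.Theory Num.Theory.
Local Open Scope ring_scope.

Definition bvec (k : nat) := {ffun 'I_k -> bool}.

Definition half_weight (k : nat) : {set bvec k} :=
  [set x : bvec k | #|[set i | x i]| == k %/ 2]%N.

Definition Zval (R : ringType) (k : nat) (delta : 'M[R]_k) (x y : bvec k) : R :=
  \sum_(i < k) \sum_(j < k) delta i j * (x i)%:R * (y j)%:R.

Definition frob2 (R : ringType) (k : nat) (delta : 'M[R]_k) : R :=
  \sum_(i < k) \sum_(j < k) delta i j ^+ 2.

Definition prob_uniform_pair (R : numFieldType) (k : nat)
    (P : bvec k -> bvec k -> bool) : R :=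
  (#|[set p : bvec k * bvec k |
       [&& p.1 \in half_weight k, p.2 \in half_weight k & P p.1 p.2]]|%:R)
  / (#|half_weight k| ^ 2)%:R.

(* Writing [Z = W / 4] with [W = sum_ij delta_ij sX_i sY_j] for the +-1 signs
   [s = 2 b - 1] (the vanishing row and column sums kill the other terms), the
   claim follows from the second moment method applied to [W^2]:
   - [E W^2 >= |delta|_F^2]: the signs of a uniform half-weight vector have
     covariance [1] on the diagonal and [-1/(k-1)] off it, and [delta] has zero
     row and column sums;
   - [E W^4 <= 144 |delta|_F^4]: a uniform half-weight vector is a uniform
     permutation of [(e, ~e)] with [e] uniform in [{0,1}^(k/2)]; for fixed
     permutations [W] becomes a Rademacher bilinear form in [e, f] whose
     coefficient matrix has squared norm at most [4 |delta|_F^2], and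
     Khintchine's inequality [E (sum_a e_a v_a)^4 <= 3 (sum_a v_a^2)^2] applies.
   A Paley-Zygmund argument then gives [Pr[|delta|_F^2 / 4 <= W^2 <= 576
   |delta|_F^2] >= 1/288]. *)

From HB Require Import structures.
From mathcomp Require Import all_boot all_order all_algebra all_fingroup.
From mathcomp Require Import ring lra zify.
Set Implicit Arguments. Unset Strict Implicit. Unset Printing Implicit Defensive.
Import Order.TTheory GRing.Theory Num.Theory.
Local Open Scope ring_scope.

Section Signs.
Variable R : realFieldType.

Definition bsign (b : bool) : R := if b then 1 else -1.

Lemma sqr_bsign b : bsign b ^+ 2 = 1.
Proof. by case: b; rewrite /bsign ?sqrrN expr1n. Qed.

Lemma CauchySchwarz_sum (I : finType) (a b : I -> R) :
  (\sum_i a i * b i) ^+ 2 <= (\sum_i a i ^+ 2) * (\sum_i b i ^+ 2).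
Proof.
pose F i j := a i ^+ 2 * b j ^+ 2 - a i * b i * (a j * b j).
have lagrange : \sum_i \sum_j (a i * b j - a j * b i) ^+ 2
    = 2 * ((\sum_i a i ^+ 2) * (\sum_i b i ^+ 2) - (\sum_i a i * b i) ^+ 2).
  transitivity (\sum_i \sum_j (F i j + F j i)).
    by apply: eq_bigr => i _; apply: eq_bigr => j _; rewrite /F; ring.
  rewrite [LHS](eq_bigr _ (fun i _ => big_split _ _ _ _ _)) big_split /=.
  rewrite [X in _ + X]exchange_big /= -mulr2n mulr_natl; congr (_ *+ 2).
  rewrite expr2 !big_distrlr -sumrB; apply: eq_bigr => i _; exact: sumrB.
rewrite -subr_ge0 -(pmulr_rge0 _ (ltr0n R 2)) -lagrange.
by apply: sumr_ge0 => i _; apply: sumr_ge0 => j _; exact: sqr_ge0.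
Qed.

Definition sign_form k (d : 'M[R]_k) (x y : bvec k) :=
  \sum_i \sum_j d i j * bsign (x i) * bsign (y j).

Lemma Zval_sign_form k (d : 'M[R]_k) x y :
  (forall i, \sum_j d i j = 0) -> (forall j, \sum_i d i j = 0) ->
  Zval d x y = sign_form d x y / 4.
Proof.
move=> row0 col0.
have indicator i j : d i j * (x i)%:R * (y j)%:R
    = (d i j + d i j * bsign (x i) + d i j * bsign (y j)
       + d i j * bsign (x i) * bsign (y j)) / 4.
  by rewrite /bsign; case: (x i); case: (y j) => /=; field.
rewrite /Zval /sign_form.
under eq_bigr => i _ do under eq_bigr => j _ do rewrite indicator.
under eq_bigr => i _ do rewrite -mulr_suml.
rewrite -mulr_suml; congr (_ / _).
under eq_bigr => i _ do rewrite !big_split /=.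
rewrite !big_split /= -[RHS]add0r; congr (_ + _).
rewrite big1 => [|i _]; last exact: row0.
rewrite big1 => [|i _]; last by rewrite -mulr_suml row0 mul0r.
rewrite exchange_big big1 => [|j _]; last by rewrite -mulr_suml col0 mul0r.
by rewrite !addr0.
Qed.

Lemma frob2_ge0 k (d : 'M[R]_k) : 0 <= frob2 d.
Proof. by apply: sumr_ge0 => i _; apply: sumr_ge0 => j _; exact: sqr_ge0. Qed.

Lemma frob2_gt0 k (d : 'M[R]_k) : d != 0 -> 0 < frob2 d.
Proof.
move=> d0; rewrite lt_def frob2_ge0 andbT.
apply: contra d0 => /eqP F0; apply/eqP/matrixP => i j; rewrite mxE.
have row_ge0 i0 : true -> 0 <= \sum_j d i0 j ^+ 2.
  by move=> _; apply: sumr_ge0 => j0 _; exact: sqr_ge0.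
have rows := psumr_eq0P row_ge0 F0.
have := psumr_eq0P (fun j _ => sqr_ge0 (d i j)) (rows i isT) (i := j) isT.
by move/eqP; rewrite sqrf_eq0 => /eqP.
Qed.

End Signs.

Section Khintchine.
Variable R : realFieldType.
Local Notation bsign := (bsign R).

Definition fcons p (b : bool) (e : bvec p) : bvec p.+1 :=
  [ffun i => if unlift ord0 i is Some j then e j else b].

Lemma fcons0 p b e : @fcons p b e ord0 = b.
Proof. by rewrite ffunE unlift_none. Qed.

Lemma fconsS p b e j : @fcons p b e (lift ord0 j) = e j.
Proof. by rewrite ffunE liftK. Qed.

Lemma card_bvec p : #|{: bvec p}| = (2 ^ p)%N.
Proof. by rewrite card_ffun card_bool card_ord. Qed.

Lemma sum_bvecS p (F : bvec p.+1 -> R) :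
  \sum_e F e = \sum_(b : bool) \sum_(e : bvec p) F (fcons b e).
Proof.
rewrite pair_big /= (reindex (fun u => fcons u.1 u.2)) //=.
exists (fun e => (e ord0, [ffun j => e (lift ord0 j)])) => [[b e]|e] _ /=.
  by rewrite fcons0; congr pair; apply/ffunP => j; rewrite ffunE fconsS.
by apply/ffunP => i; rewrite ffunE; case: unliftP => [j ->|->]; rewrite ?ffunE.
Qed.

Lemma sum_bsign_fcons p (I : Type) (v : 'I_p.+1 -> I -> R) b e i :
  \sum_n bsign (fcons b e n) * v n i
  = bsign b * v ord0 i + \sum_(n < p) bsign (e n) * v (lift ord0 n) i.
Proof.
by rewrite big_ord_recl fcons0; congr (_ + _); apply: eq_bigr => n _; rewrite fconsS.
Qed.

Lemma khintchine2 p (I : finType) (v : 'I_p -> I -> R) :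
  \sum_(e : bvec p) \sum_i (\sum_n bsign (e n) * v n i) ^+ 2
  = (2 ^ p)%:R * \sum_n \sum_i v n i ^+ 2.
Proof.
elim: p v => [|p IH] v.
  rewrite big_ord0 mulr0; apply: big1 => e _; apply: big1 => i _.
  by rewrite big_ord0 expr0n.
rewrite sum_bvecS big_bool -big_split /=.
under eq_bigr => e _ do rewrite -big_split /=.
under eq_bigr => e _ do under eq_bigr => i _ do rewrite !sum_bsign_fcons.
set S := fun (e : bvec p) i => \sum_(n < p) bsign (e n) * v (lift ord0 n) i.
transitivity (\sum_(e : bvec p)
                (2 * \sum_i v ord0 i ^+ 2 + 2 * \sum_i S e i ^+ 2)).
  apply: eq_bigr => e _; rewrite !mulr_sumr -big_split /=.
  by apply: eq_bigr => i _; rewrite /S; ring.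
rewrite big_split /= -!mulr_sumr IH sumr_const card_bvec.
by rewrite big_ord_recl expnS natrM -mulr_natr; ring.
Qed.

(* The two sums are [C + 2 B + A] and [C - 2 B + A], where [B^2 <= C A] by
   Cauchy-Schwarz. *)
Lemma sum_sqr_pm_sqr_le (I : finType) (u v : I -> R) :
  (\sum_i (u i + v i) ^+ 2) ^+ 2 + (\sum_i (- u i + v i) ^+ 2) ^+ 2
  <= 2 * (\sum_i v i ^+ 2) ^+ 2 + 12 * (\sum_i u i ^+ 2) * (\sum_i v i ^+ 2)
     + 2 * (\sum_i u i ^+ 2) ^+ 2.
Proof.
set A := \sum_i v i ^+ 2; set B := \sum_i u i * v i; set C := \sum_i u i ^+ 2.
have CS : B ^+ 2 <= C * A by apply: CauchySchwarz_sum.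
have -> : \sum_i (u i + v i) ^+ 2 = C + 2 * B + A.
  by rewrite /C /B /A mulr_sumr -!big_split /=; apply: eq_bigr => i _; ring.
have -> : \sum_i (- u i + v i) ^+ 2 = C - 2 * B + A.
  by rewrite /C /B /A mulr_sumr -sumrB -!big_split /=; apply: eq_bigr => i _; ring.
nra.
Qed.

Lemma khintchine4 p (I : finType) (v : 'I_p -> I -> R) :
  \sum_(e : bvec p) (\sum_i (\sum_n bsign (e n) * v n i) ^+ 2) ^+ 2
  <= (2 ^ p)%:R * 3 * (\sum_n \sum_i v n i ^+ 2) ^+ 2.
Proof.
elim: p v => [|p IH] v.
  rewrite big1 ?big_ord0 ?expr0n ?mulr0 // => e _.
  by rewrite big1 ?expr0n // => i _; rewrite big_ord0 expr0n.
rewrite sum_bvecS big_bool -big_split /=.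
set S := fun (e : bvec p) i => \sum_(n < p) bsign (e n) * v (lift ord0 n) i.
have sum_true e : \sum_i (\sum_n bsign (fcons true e n) * v n i) ^+ 2
                  = \sum_i (v ord0 i + S e i) ^+ 2.
  by apply: eq_bigr => i _; rewrite sum_bsign_fcons mul1r.
have sum_false e : \sum_i (\sum_n bsign (fcons false e n) * v n i) ^+ 2
                   = \sum_i (- v ord0 i + S e i) ^+ 2.
  by apply: eq_bigr => i _; rewrite sum_bsign_fcons mulN1r.
under eq_bigr => e _ do rewrite sum_true sum_false.
apply: le_trans; first by apply: ler_sum => e _; exact: sum_sqr_pm_sqr_le.
rewrite !big_split /= -!mulr_sumr sumr_const card_bvec.
have := khintchine2 (fun n i => v (lift ord0 n) i); rewrite -/S => ->.
have := IH (fun n i => v (lift ord0 n) i); rewrite -/S.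
set T := \sum_(n < p) \sum_i v (lift ord0 n) i ^+ 2 => IHT.
set C := \sum_i v ord0 i ^+ 2.
have T0 : 0 <= T by apply: sumr_ge0 => n _; apply: sumr_ge0 => i _; exact: sqr_ge0.
have C0 : 0 <= C by apply: sumr_ge0 => i _; exact: sqr_ge0.
have P0 : 0 < (2 ^ p)%:R :> R by rewrite ltr0n expn_gt0.
rewrite big_ord_recl -/C -/T expnS natrM -mulr_natr.
set Q := (2 ^ p)%:R in P0 IHT *.
nra.
Qed.

Lemma khintchine4_bilinear p (A : 'M[R]_p) :
  \sum_(e : bvec p) \sum_(f : bvec p) sign_form A e f ^+ 4
  <= ((2 ^ p)%:R * 3) ^+ 2 * frob2 A ^+ 2.
Proof.
rewrite exchange_big /=.
have inner (f : bvec p) : \sum_(e : bvec p) sign_form A e f ^+ 4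
    <= (2 ^ p)%:R * 3 * (\sum_a (\sum_b bsign (f b) * A a b) ^+ 2) ^+ 2.
  have -> : \sum_(e : bvec p) sign_form A e f ^+ 4
      = \sum_(e : bvec p) (\sum_(i < 1)
          (\sum_a bsign (e a) * \sum_b bsign (f b) * A a b) ^+ 2) ^+ 2.
    apply: eq_bigr => e _; rewrite big_ord1 -exprM; congr (_ ^+ _).
    by apply: eq_bigr => a _; rewrite mulr_sumr; apply: eq_bigr => b _; ring.
  have := khintchine4 (fun a (_ : 'I_1) => \sum_b bsign (f b) * A a b).
  by under [X in _ <= _ * X ^+ 2 -> _]eq_bigr => a _ do rewrite big_ord1.
apply: le_trans; first by apply: ler_sum => f _; exact: inner.
rewrite -mulr_sumr expr2 -mulrA ler_pM2l ?mulr_gt0 ?ltr0n ?expn_gt0 //.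
have := khintchine4 (fun b a => A a b).
by rewrite /frob2 [X in _ <= _ * X ^+ 2 -> _]exchange_big.
Qed.

End Khintchine.

Section PermAction.
Variable k : nat.

Definition bvec_perm (x : bvec k) (s : {perm 'I_k}) : bvec k := [ffun i => x (s i)].

Lemma bvec_permM x s t : bvec_perm (bvec_perm x t) s = bvec_perm x (s * t)%g.
Proof. by apply/ffunP => i; rewrite !ffunE permM. Qed.

Lemma bvec_perm1 x : bvec_perm x 1%g = x.
Proof. by apply/ffunP => i; rewrite !ffunE perm1. Qed.

Lemma weight_bvec_perm x s : #|[set i | bvec_perm x s i]| = #|[set i | x i]|.
Proof.
have -> : [set i | bvec_perm x s i] = s @^-1: [set i | x i].
  by apply/setP => i; rewrite !inE ffunE.
exact: card_preimset (@perm_inj _ s).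
Qed.

Lemma half_weight_perm x s :
  (bvec_perm x s \in half_weight k) = (x \in half_weight k).
Proof. by rewrite !inE weight_bvec_perm. Qed.

Lemma sum_half_weight_perm (R : nmodType) (f : bvec k -> R) s :
  \sum_(x in half_weight k) f (bvec_perm x s) = \sum_(x in half_weight k) f x.
Proof.
rewrite [RHS](reindex (bvec_perm^~ s)) /=.
  by apply: eq_bigl => x; rewrite half_weight_perm.
by exists (bvec_perm^~ s^-1)%g => x _; rewrite bvec_permM ?mulVg ?mulgV bvec_perm1.
Qed.

Lemma weight_eq_exists_diff (u v : bvec k) :
  #|[set i | u i]| = #|[set i | v i]| -> u != v -> exists i, u i && ~~ v i.
Proof.
move=> wuv nuv; apply/existsP; apply: contraNT nuv => /existsPn uv.
have sub : [set i | u i] \subset [set i | v i].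
  by apply/subsetP => i; rewrite !inE => ui; move: (uv i); rewrite ui /= negbK.
apply/eqP/ffunP => i; move: (subset_cardP wuv sub) => /(_ i).
by rewrite !inE; case: (u i); case: (v i).
Qed.

(* Induction on the number of disagreements: a transposition swapping a position
   where only [y] is set with one where only [x] is set removes two of them. *)
Lemma bvec_perm_transitive (x y : bvec k) :
  #|[set i | x i]| = #|[set i | y i]| -> exists s, y = bvec_perm x s.
Proof.
move=> wxy; move: {2}#|_| (leqnn #|[set i | x i != y i]|) => n.
elim: n x wxy => [|n IH] x wxy hn.
  exists 1%g; rewrite bvec_perm1; apply/ffunP => i; apply/eqP; apply: contraT => xyi.
  by move: hn; rewrite leqn0 => /eqP/cards0_eq/setP/(_ i); rewrite !inE eq_sym xyi.
have [<-|nxy] := eqVneq x y; first by exists 1%g; rewrite bvec_perm1.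
have [i /andP[yi nxi]] : exists i, y i && ~~ x i.
  by apply: weight_eq_exists_diff; rewrite // eq_sym.
have [j /andP[xj nyj]] := weight_eq_exists_diff wxy nxy.
set x' := bvec_perm x (tperm i j).
have fewer : [set l | x' l != y l] \proper [set l | x l != y l].
  apply/properP; split; last by exists i; rewrite !inE ?yi ?(negbTE nxi) // ffunE tpermL xj.
  apply/subsetP => l; rewrite !inE ffunE.
  case: tpermP => [->|->|_ _] //; first by rewrite xj yi.
  by rewrite (negbTE nxi) (negbTE nyj).
have [s ->] : exists s, y = bvec_perm x' s.
  by apply: IH; [rewrite weight_bvec_perm | exact: leq_trans (proper_card fewer) hn].
by exists (s * tperm i j)%g; rewrite bvec_permM.
Qed.

Lemma sum_half_weight_orbit (R : nmodType) (f : bvec k -> R) x0 :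
  x0 \in half_weight k ->
  (\sum_(x in half_weight k) f x) *+ #|{perm 'I_k}|
  = (\sum_(s : {perm 'I_k}) f (bvec_perm x0 s)) *+ #|half_weight k|.
Proof.
move=> hx0; transitivity (\sum_(x in half_weight k) \sum_s f (bvec_perm x s)).
  rewrite exchange_big /= -sumr_const; apply: eq_bigr => s _.
  by rewrite sum_half_weight_perm.
rewrite -sumr_const; apply: eq_bigr => x; move: hx0; rewrite !inE => /eqP w0 /eqP w.
have [r ->] := bvec_perm_transitive (etrans w0 (esym w)).
under eq_bigr => s _ do rewrite bvec_permM.
by rewrite [RHS](reindex_inj (mulIg r)).
Qed.

End PermAction.

Section HalfWeightMoments.
Variable R : realFieldType.
Local Notation bsign := (bsign R).
Variable k : nat.
Local Notation sign_form := (@sign_form R k).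
Hypothesis k_ge2 : (2 <= k)%N.
Hypothesis k_even : ~~ odd k.

Local Notation H := (half_weight k).
Local Notation n := (#|half_weight k|%:R : R).

Let predk_neq0 : (k.-1)%:R != 0 :> R.
Proof. by rewrite pnatr_eq0 -lt0n; lia. Qed.

Lemma sum_bsign_half_weight x : x \in H -> \sum_i bsign (x i) = 0.
Proof.
rewrite inE => /eqP wx; rewrite (bigID (fun i => x i)) /=.
rewrite (eq_bigr (fun _ => 1)) => [|i ->] //.
rewrite [X in _ + X](eq_bigr (fun _ => -1)) => [|i /negbTE ->] //.
rewrite !sumr_const -cardsE wx.
have -> : #|[pred i | ~~ x i]| = (k %/ 2)%N.
  have := cardC [pred i | x i]; rewrite card_ord -cardsE wx.
  have := even_halfK k_even; rewrite divn2 -addnn => ek.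
  by rewrite (eq_card (_ : [predC _] =i [pred i | ~~ x i])) //; lia.
by rewrite mulNrn subrr.
Qed.

Lemma sum_half_weight_bsign_diag a :
  \sum_(x in H) bsign (x a) * bsign (x a) = n.
Proof. by rewrite (eq_bigr (fun _ => 1)) ?sumr_const // => x _; rewrite -expr2 sqr_bsign. Qed.

(* All off-diagonal correlations agree (swap the two positions), and each row
   of correlations sums to 0. *)
Lemma sum_half_weight_bsign_offdiag a b : a != b ->
  \sum_(x in H) bsign (x a) * bsign (x b) = - n / (k.-1)%:R.
Proof.
move=> ab; pose N b := \sum_(x in H) bsign (x a) * bsign (x b).
have N_const b' : a != b' -> N b' = N b.
  move=> ab'; rewrite /N -(sum_half_weight_perm _ (tperm b b')).
  by apply: eq_bigr => x _; rewrite /= !ffunE tpermR tpermD // eq_sym.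
have row0 : \sum_b N b = 0.
  rewrite /N exchange_big big1 // => x hx.
  by rewrite -mulr_sumr sum_bsign_half_weight ?mulr0.
rewrite (bigD1 a) //= /N sum_half_weight_bsign_diag -/(N _) in row0.
rewrite (eq_bigr (fun _ => N b)) ?sumr_const in row0; last first.
  by move=> c ca; apply: N_const; rewrite eq_sym.
have card_a' : #|(fun i : 'I_k => i != a)| = k.-1.
  by rewrite -[in RHS](card_ord k) -(cardC1 a); apply: eq_card.
rewrite card_a' in row0.
apply: (canRL (mulfK predk_neq0)); apply/eqP.
by rewrite -/(N b) mulr_natr -addr_eq0 addrC row0.
Qed.

Lemma sum_half_weight_lin_sqr (w : 'I_k -> R) : \sum_i w i = 0 ->
  \sum_(x in H) (\sum_i w i * bsign (x i)) ^+ 2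
  = n * (1 + (k.-1)%:R^-1) * \sum_i w i ^+ 2.
Proof.
move=> w0.
have expand x : (\sum_i w i * bsign (x i)) ^+ 2
    = \sum_i \sum_j w i * w j * (bsign (x i) * bsign (x j)).
  rewrite expr2 big_distrlr /=; apply: eq_bigr => i _; apply: eq_bigr => j _; ring.
under eq_bigr => x _ do rewrite expand.
rewrite exchange_big mulr_sumr; apply: eq_bigr => i _.
rewrite exchange_big /=; under eq_bigr => j _ do rewrite -mulr_sumr.
rewrite (bigD1 i) //= sum_half_weight_bsign_diag.
under eq_bigr => j ji do rewrite sum_half_weight_bsign_offdiag 1?eq_sym //.
rewrite -mulr_suml -mulr_sumr.
have -> : \sum_(j | j != i) w j = - w i.
  by move: w0; rewrite (bigD1 i) //= => /eqP; rewrite addrC addr_eq0 => /eqP.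
by field; exact: predk_neq0.
Qed.

Lemma sum_half_weight_sign_form_sqr (d : 'M[R]_k) :
  (forall i, \sum_j d i j = 0) -> (forall j, \sum_i d i j = 0) ->
  \sum_(x in H) \sum_(y in H) sign_form d x y ^+ 2
  = (n * (1 + (k.-1)%:R^-1)) ^+ 2 * frob2 d.
Proof.
move=> row0 col0.
have by_columns x y :
    sign_form d x y = \sum_j (\sum_i d i j * bsign (x i)) * bsign (y j).
  by rewrite /sign_form exchange_big; apply: eq_bigr => j _; rewrite mulr_suml.
have inner x : \sum_(y in H) sign_form d x y ^+ 2
    = n * (1 + (k.-1)%:R^-1) * \sum_j (\sum_i d i j * bsign (x i)) ^+ 2.
  under eq_bigr => y _ do rewrite by_columns.
  apply: sum_half_weight_lin_sqr.
  by rewrite exchange_big big1 // => i _; rewrite -mulr_suml row0 mul0r.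
under eq_bigr => x _ do rewrite inner.
rewrite -mulr_sumr exchange_big /=.
under eq_bigr => j _ do rewrite sum_half_weight_lin_sqr ?col0 //.
by rewrite -mulr_sumr /frob2 [in RHS]exchange_big mulrA expr2.
Qed.

Lemma sum_half_weight_sign_form_sqr_ge (d : 'M[R]_k) :
  (forall i, \sum_j d i j = 0) -> (forall j, \sum_i d i j = 0) ->
  n ^+ 2 * frob2 d <= \sum_(x in H) \sum_(y in H) sign_form d x y ^+ 2.
Proof.
move=> row0 col0; rewrite sum_half_weight_sign_form_sqr //.
apply: ler_wpM2r; first exact: frob2_ge0.
rewrite exprMn ler_peMr ?sqr_ge0 //.
by rewrite exprn_ege1 // lerDl invr_ge0 ler0n.
Qed.

End HalfWeightMoments.

Section PermutedMatrix.
Variables (R : realFieldType) (k : nat).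

Lemma sign_form_perm (d : 'M[R]_k) x y s t :
  sign_form d (bvec_perm x s) (bvec_perm y t)
  = sign_form (row_perm s^-1 (col_perm t^-1 d)) x y.
Proof.
rewrite /sign_form (reindex_inj (@perm_inj _ s^-1%g)) /=.
apply: eq_bigr => i _; rewrite (reindex_inj (@perm_inj _ t^-1%g)) /=.
by apply: eq_bigr => j _; rewrite !mxE !ffunE !permKV.
Qed.

Lemma frob2_perm (d : 'M[R]_k) s t : frob2 (row_perm s (col_perm t d)) = frob2 d.
Proof.
rewrite /frob2 [RHS](reindex_inj (@perm_inj _ s)) /=.
apply: eq_bigr => i _; rewrite [RHS](reindex_inj (@perm_inj _ t)) /=.
by apply: eq_bigr => j _; rewrite !mxE.
Qed.

End PermutedMatrix.

Section Pairing.
Variables (R : realFieldType) (p : nat).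
Local Notation k := (p + p)%N.
Local Notation bsign := (bsign R).

Definition pair_bvec (e : bvec p) : bvec k :=
  [ffun i => match split i with inl a => e a | inr a => ~~ e a end].

Lemma pair_bvec_lshift e a : pair_bvec e (lshift p a) = e a.
Proof. by rewrite ffunE (unsplitK (inl a)). Qed.

Lemma pair_bvec_rshift e a : pair_bvec e (rshift p a) = ~~ e a.
Proof. by rewrite ffunE (unsplitK (inr a)). Qed.

Lemma pair_bvec_half_weight e : pair_bvec e \in half_weight k.
Proof.
rewrite inE -sum1_card big_mkcond /= big_split_ord /=.
under eq_bigr => a _ do rewrite inE pair_bvec_lshift.
under [X in (_ + X)%N]eq_bigr => a _ do rewrite inE pair_bvec_rshift.
rewrite -big_split /= (eq_bigr (fun _ => 1%N)) => [|a _]; last by case: (e a).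
by rewrite sum1_card card_ord addnn divn2 doubleK.
Qed.

Lemma card_half_weight_gt0 : (0 < #|half_weight k|)%N.
Proof. by apply/card_gt0P; exists (pair_bvec [ffun=> true]); exact: pair_bvec_half_weight. Qed.

Definition fold_mx (D : 'M[R]_k) : 'M[R]_p :=
  ulsubmx D - ursubmx D - dlsubmx D + drsubmx D.

Lemma sign_form_pair (D : 'M[R]_k) e f :
  sign_form D (pair_bvec e) (pair_bvec f) = sign_form (fold_mx D) e f.
Proof.
rewrite /sign_form big_split_ord /= -big_split /=; apply: eq_bigr => a _.
rewrite !big_split_ord /= -!big_split /=; apply: eq_bigr => b _.
rewrite !pair_bvec_lshift !pair_bvec_rshift !mxE /bsign.
by case: (e a); case: (f b) => /=; ring.
Qed.

Lemma frob2_fold_mx (D : 'M[R]_k) : frob2 (fold_mx D) <= 4 * frob2 D.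
Proof.
have ineq4 (x1 x2 x3 x4 : R) :
    (x1 - x2 - x3 + x4) ^+ 2 <= 4 * (x1 ^+ 2 + x2 ^+ 2 + (x3 ^+ 2 + x4 ^+ 2)).
  have := sqr_ge0 (x1 + x2); have := sqr_ge0 (x1 + x3); have := sqr_ge0 (x1 - x4).
  have := sqr_ge0 (x2 - x3); have := sqr_ge0 (x2 + x4); have := sqr_ge0 (x3 + x4).
  nra.
rewrite /frob2 big_split_ord /= -big_split /= mulr_sumr; apply: ler_sum => a _.
rewrite !big_split_ord /= -!big_split /= mulr_sumr; apply: ler_sum => b _.
by rewrite !mxE; apply: ineq4.
Qed.

Local Notation H := (half_weight k).
Local Notation n := (#|half_weight k|%:R : R).

Lemma sum_half_weight_le (g : bvec k -> R) (c : R) :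
  (forall s, \sum_(e : bvec p) g (bvec_perm (pair_bvec e) s) <= (2 ^ p)%:R * c) ->
  \sum_(x in H) g x <= n * c.
Proof.
move=> hg; set P := #|{perm 'I_k}|; set Q := (2 ^ p)%N.
set X := \sum_(x in H) g x.
set T := \sum_(e : bvec p) \sum_s g (bvec_perm (pair_bvec e) s).
have PQ0 : 0 < (P * Q)%:R :> R.
  by rewrite ltr0n muln_gt0 expn_gt0 andbT; apply/card_gt0P; exists 1%g.
have orbits : X *+ P *+ Q = T *+ #|H|.
  transitivity (\sum_(e : bvec p) X *+ P); first by rewrite sumr_const card_bvec.
  rewrite /T -[RHS]sumrMnl; apply: eq_bigr => e _.
  exact: sum_half_weight_orbit (pair_bvec_half_weight e).
have T_le : T <= (Q%:R * c) *+ P.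
  by rewrite /T exchange_big -sumr_const; apply: ler_sum => s _; exact: hg.
have n0 : 0 <= n by [].
rewrite -(ler_pM2r PQ0) natrM mulrA !mulr_natr orbits -mulr_natr.
by rewrite -mulr_natr in T_le; nra.
Qed.

Lemma sum_half_weight2_le (G : bvec k -> bvec k -> R) (c : R) :
  (forall s t, \sum_(e : bvec p) \sum_(f : bvec p)
     G (bvec_perm (pair_bvec e) s) (bvec_perm (pair_bvec f) t) <= (2 ^ p)%:R ^+ 2 * c) ->
  \sum_(x in H) \sum_(y in H) G x y <= n ^+ 2 * c.
Proof.
move=> hG; rewrite expr2 -mulrA; apply: sum_half_weight_le => s.
rewrite exchange_big -mulrCA; apply: sum_half_weight_le => t.
by rewrite exchange_big mulrA -expr2; exact: hG.
Qed.

Lemma sum_half_weight_sign_form_4 (d : 'M[R]_k) :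
  \sum_(x in H) \sum_(y in H) sign_form d x y ^+ 4 <= n ^+ 2 * (144 * frob2 d ^+ 2).
Proof.
apply: sum_half_weight2_le => s t.
set D := row_perm s^-1 (col_perm t^-1 d).
under eq_bigr => e _ do under eq_bigr => f _ do rewrite sign_form_perm -/D sign_form_pair.
apply: le_trans (khintchine4_bilinear _) _.
have F0 := frob2_ge0 (fold_mx D).
have := frob2_fold_mx D; rewrite frob2_perm => Ffold.
have Q0 : 0 <= ((2 ^ p)%:R : R) ^+ 2 by exact: sqr_ge0.
rewrite exprMn -mulrA; apply: ler_wpM2l => //; nra.
Qed.

End Pairing.

Section PaleyZygmund.
Variable R : realFieldType.

(* AM-GM inside the window, and [w <= w^2 / (4 K F)] above it. *)
Lemma le_window_bound (F K w : R) : 0 < F -> 0 < K ->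
  w <= F / 4 + w ^+ 2 / (4 * K * F) + K * F * ((F / 4 <= w) && (w <= 4 * K * F))%:R.
Proof.
move=> F0 K0; have KF0 : 0 < 4 * K * F by rewrite !mulr_gt0.
have sq0 : 0 <= w ^+ 2 / (4 * K * F) by rewrite divr_ge0 ?sqr_ge0 ?ltW.
have amgm : w <= w ^+ 2 / (4 * K * F) + K * F.
  rewrite -subr_ge0 (_ : _ - _ = (w - 2 * K * F) ^+ 2 / (4 * K * F)).
    by rewrite divr_ge0 ?sqr_ge0 ?ltW.
  by field; rewrite !gt_eqF.
case: (leP (F / 4) w) => [lo|hi] /=; last by rewrite mulr0; lra.
case: (leP w (4 * K * F)) => [up|up] /=; first by rewrite mulr1; lra.
have : w <= w ^+ 2 / (4 * K * F) by rewrite ler_pdivlMr // expr2 ler_pM2l; lra.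
by rewrite mulr0; lra.
Qed.

(* Summing [le_window_bound] gives [F <= F/4 + F/4 + K F Pr[window]]. *)
Lemma paley_zygmund_window (T : finType) (A : {pred T}) (w : T -> R) (F K : R) :
  0 < F -> 0 < K ->
  #|A|%:R * F <= \sum_(t in A) w t ->
  \sum_(t in A) w t ^+ 2 <= #|A|%:R * (K * F ^+ 2) ->
  #|A|%:R / (2 * K) <= #|[pred t in A | (F / 4 <= w t) && (w t <= 4 * K * F)]|%:R.
Proof.
move=> F0 K0 mean2 mean4.
set inw := fun t => (F / 4 <= w t) && (w t <= 4 * K * F).
have count_window : \sum_(t in A) (inw t)%:R = #|[pred t in A | inw t]|%:R :> R.
  rewrite -sum1_card natr_sum (eq_bigl (fun t => (t \in A) && inw t)) // big_mkcondr.
  by apply: eq_bigr => t _; case: (inw t).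
have : \sum_(t in A) w t
       <= \sum_(t in A) (F / 4 + w t ^+ 2 / (4 * K * F) + K * F * (inw t)%:R).
  by apply: ler_sum => t _; exact: le_window_bound.
rewrite !big_split /= sumr_const -!mulr_suml -mulr_sumr count_window.
set N := #|A|%:R; set cnt := #|_|%:R => summed.
have tail : (\sum_(t in A) w t ^+ 2) / (4 * K * F) <= N * F / 4.
  by rewrite ler_pdivrMr ?mulr_gt0 //; apply: (le_trans mean4); nra.
have N0 : 0 <= N by [].
rewrite ler_pdivrMr ?mulr_gt0 //.
rewrite -mulr_natr -/N in summed; nra.
Qed.

Lemma window_scaled_sqr (F w : R) : 0 < F ->
  (ratr (64%:R^-1 : rat) <= (w / 4) ^+ 2 / F) && ((w / 4) ^+ 2 / F <= ratr (36%:R : rat))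
  = (F / 4 <= w ^+ 2) && (w ^+ 2 <= 4 * 144 * F).
Proof.
move=> F0; rewrite fmorphV !rmorph_nat ler_pdivlMr // ler_pdivrMr //.
rewrite expr_div_n; set u := w ^+ 2.
by apply/idP/idP => /andP[h1 h2]; apply/andP; split; lra.
Qed.

End PaleyZygmund.

Section UniformPairs.
Variables (R : realFieldType) (k : nat).
Local Notation H := (half_weight k).

Lemma sum_predX_half_weight (G : bvec k -> bvec k -> R) :
  \sum_(q in [predX H & H]) G q.1 q.2 = \sum_(x in H) \sum_(y in H) G x y.
Proof. by rewrite pair_big_dep; apply: eq_bigl => q; rewrite inE. Qed.

Lemma prob_uniform_pairE (P : bvec k -> bvec k -> bool) :
  prob_uniform_pair R P
  = #|[pred q in [predX H & H] | P q.1 q.2]|%:R / #|[predX H & H]|%:R.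
Proof.
rewrite /prob_uniform_pair cardX expnS expn1; congr (_%:R / _).
by apply: eq_card => q; rewrite !inE andbA.
Qed.

End UniformPairs.

Theorem theorem6p6 :
  exists c1 c2 rho : rat,
    [/\ 0 < c1, c1 <= c2 & 0 < rho] /\
    forall (R : realFieldType) (k : nat) (delta : 'M[R]_k),
      (2 <= k)%N -> ~~ odd k -> delta != 0 ->
      (forall i0 : 'I_k, \sum_(j < k) delta i0 j = 0) ->
      (forall j0 : 'I_k, \sum_(i < k) delta i j0 = 0) ->
      ratr rho <= prob_uniform_pair R
        (fun x y => (ratr c1 <= Zval delta x y ^+ 2 / frob2 delta)
                    && (Zval delta x y ^+ 2 / frob2 delta <= ratr c2)).
Proof.
exists 64%:R^-1, 36%:R, 576%:R^-1; split; first by split; lra.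
move=> R k d k_ge2 k_even d0 row0 col0.
have [p k_pp] : exists p, k = (p + p)%N by exists k./2; rewrite addnn even_halfK.
subst k; set H := half_weight (p + p); set F := frob2 d.
have F0 : 0 < F := frob2_gt0 d0.
pose w (q : bvec (p + p) * bvec (p + p)) := sign_form d q.1 q.2 ^+ 2.
have N2 : #|[predX H & H]|%:R = #|H|%:R ^+ 2 :> R by rewrite cardX natrM expr2.
have mean2 : #|[predX H & H]|%:R * F <= \sum_(q in [predX H & H]) w q.
  rewrite N2 (sum_predX_half_weight (fun x y => sign_form d x y ^+ 2)).
  exact: sum_half_weight_sign_form_sqr_ge.
have mean4 : \sum_(q in [predX H & H]) w q ^+ 2 <= #|[predX H & H]|%:R * (144 * F ^+ 2).
  rewrite N2 (sum_predX_half_weight (fun x y => sign_form d x y ^+ 2 ^+ 2)).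
  under eq_bigr => x _ do under eq_bigr => y _ do rewrite -exprM.
  exact: sum_half_weight_sign_form_4.
have := paley_zygmund_window F0 (ltr0Sn _ _) mean2 mean4; rewrite N2 => pz.
rewrite prob_uniform_pairE N2 (@eq_card _ _ [pred t in [predX H & H] |
    (F / 4 <= w t) && (w t <= 4 * 144 * F)]) => [|q]; last first.
  by rewrite !inE Zval_sign_form // window_scaled_sqr.
have N0 : 0 < #|H|%:R ^+ 2 :> R by rewrite exprn_gt0 // ltr0n card_half_weight_gt0.
move: pz N0; set N := #|H|%:R ^+ 2; set cnt := #|_|%:R => pz N0.
by rewrite fmorphV rmorph_nat ler_pdivlMr //; lra.
Qed.
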